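(* Fix $C\ge0$. For $0\le k\le n$ put $N=n-k$ and \[ T_k=\sum_{g\in\mathcal M(k)}\Bigl|\sum_{h\in\mathcal M(N)}\psi(Q_A(gh))\Bigr|. \] Then as $n\to\infty$, uniformly for $0\le k\le 9n/20+C$, $T_k\ll_A q^{19n/20+o(n)}$.
   Context: $q$ is a fixed odd prime power; fix $m\ge0$ and $c_0,\dots,c_m\in\mathbb F_q$ with $c_m\ne0$. For each $n$, $\ell_n$ is an arbitrary linear form in the coefficients $f_0,\dots,f_n$ and for $f=\sum_{i=0}^nf_it^i$ of degree $n$, $Q_A(f)=\sum_{j=0}^m c_j\sum_{i=j}^n f_if_{i-j}+\ell_n(f)$. $\mathcal M(k)$ is the set of monic polynomials of degree $k$ in $\mathbb F_q[t]$, $\psi$ a non-trivial additive character of $\mathbb F_q$. Implied constants depend only on $q$, $C$ and $c_0,\dots,c_m$ and are uniform in $\ell_n,\psi$; $q^{o(n)}$ is a factor $q^{\varepsilon(n)n}$ with $\varepsilon(n)\to0$. *)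

From HB Require Import structures.
From mathcomp Require Import all_boot all_order all_algebra all_field.
From mathcomp Require Import complex.
From mathcomp Require Import reals exp.
Set Implicit Arguments. Unset Strict Implicit. Unset Printing Implicit Defensive.
Import Order.TTheory GRing.Theory Num.Theory.
Local Open Scope ring_scope.

(* The monic polynomials of degree k over F, each listed exactly once:
   t = (t_0,...,t_(k-1)) |-> t_0 + t_1 X + ... + t_(k-1) X^(k-1) + X^k. *)
Definition monic_polys (F : finFieldType) (k : nat) : seq {poly F} :=
  [seq Poly (rcons (val t) 1) | t : k.-tuple F].

Definition QA (F : finFieldType) (m : nat) (c : nat -> F) (a : nat -> F)
    (n : nat) (f : {poly F}) : F :=
  \sum_(j < m.+1) c j * (\sum_(j <= i < n.+1) f`_i * f`_(i - j))
  + \sum_(i < n.+1) a i * f`_i.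

Definition add_char (F : finFieldType) (R : realType) (psi : F -> R[i]) : Prop :=
  psi 0 = 1 /\ forall x y : F, psi (x + y) = psi x * psi y.

Definition nontrivial_char (F : finFieldType) (R : realType) (psi : F -> R[i])
  : Prop := exists x : F, psi x != 1.

(* T_k with N = n - k, where n = k + N = deg(gh) is the degree used in Q_A. *)
Definition Tk (F : finFieldType) (R : realType) (m : nat) (c a : nat -> F)
    (psi : F -> R[i]) (n k : nat) : R[i] :=
  \sum_(g <- monic_polys F k)
    `| \sum_(h <- monic_polys F (n - k)) psi (QA m c a n (g * h)) |.

(* Write [N = n - k] and [h = X^N + v] with [deg v < N].  For a fixed monic [g]
   of degree [k], [v |-> Q_A(g (X^N + v))] is a quadratic function whose
   polarisation is [B(g u, g v)], where [B] is the polar form of the quadratic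
   part of [Q_A].  Weyl differencing bounds the square of the inner sum by
   [q^N] times the size of the radical [{v | B(g v, g w) = 0 for all w}].
   Pairing [v] with [w = X^s] for a well chosen [s] isolates the product of
   [c_m], the lowest coefficient of [g] and the top coefficient of [g v] (and a
   factor 2 when [m = 0], harmless as [q] is odd), so a nonzero element of the
   radical has degree at least [N - k - m]: the radical is determined by [k + m]
   coefficients and has at most [q^(k+m)] elements.  Hence every inner sum is
   at most [q^((n+m)/2)], and [T_k <= q^(k + (n+m)/2) <= q^(C + m/2) q^(19n/20)];
   no [q^(o(n))] loss is needed. *)

From HB Require Import structures.
From mathcomp Require Import all_boot all_order all_algebra all_field.
From mathcomp Require Import complex.
From mathcomp Require Import reals exp.
From mathcomp Require Import ring lra zify.
Import Order.TTheory GRing.Theory Num.Theory.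
Local Open Scope ring_scope.
Set Implicit Arguments. Unset Strict Implicit. Unset Printing Implicit Defensive.

Lemma poly_lowest_coef (R : ringType) (p : {poly R}) :
  p != 0 -> exists2 o, p`_o != 0 & forall i, (i < o)%N -> p`_i = 0.
Proof.
move=> p0; have ex_nz : exists i, p`_i != 0.
  by exists (size p).-1; rewrite -lead_coefE lead_coef_eq0.
case: (ex_minnP ex_nz) => o po o_min; exists o => // i io.
by apply/eqP; apply: contraTT io => /o_min; rewrite -leqNgt.
Qed.

Section PolarForm.
Variables (F : fieldType) (m : nat) (c : nat -> F).

Definition corr (n j : nat) (u v : {poly F}) : F :=
  \sum_(j <= i < n.+1) u`_i * v`_(i - j).

Definition polar_form (n : nat) (u v : {poly F}) : F :=
  \sum_(j < m.+1) c j * (corr n j u v + corr n j v u).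

Lemma polar_formC n u v : polar_form n u v = polar_form n v u.
Proof. by apply: eq_bigr => j _; rewrite addrC. Qed.

Lemma polar_form_is_scalar n u : scalar (polar_form n u).
Proof.
move=> x v w; rewrite /polar_form mulr_sumr -big_split /=; apply: eq_bigr => j _.
rewrite /corr mulrCA -mulrDr; congr (_ * _).
rewrite mulrDr !mulr_sumr -!big_split /=; apply: eq_bigr => i _.
by rewrite !coefD !coefZ; ring.
Qed.

HB.instance Definition _ n u :=
  GRing.isLinear.Build F {poly F} F *%R (polar_form n u) (polar_form_is_scalar n u).

Lemma corr_low_high n j a b (u v : {poly F}) :
    (forall i, (i < a)%N -> u`_i = 0) -> (forall i, (b < i)%N -> v`_i = 0) ->
  (b + j <= a <= n)%N -> corr n j u v = (b + j == a)%:R * (u`_a * v`_b).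
Proof.
move=> u_low v_high /andP[ba an].
have ja : (j <= a < n.+1)%N by lia.
rewrite /corr (bigD1_seq a) ?iota_uniq ?mem_index_iota //=.
rewrite big1_seq ?addr0 => [|i /andP[ia /[!mem_index_iota] ji]]; last first.
  have [/u_low -> | ai] := ltnP i a; first by rewrite mul0r.
  by rewrite v_high ?mulr0 //; move: ia ai; rewrite neq_ltn; lia.
have [<- | bja] := eqVneq (b + j)%N a; first by rewrite addnK mul1r.
by rewrite v_high ?mulr0 ?mul0r //; lia.
Qed.

Lemma corr_high_low n j a b (u v : {poly F}) :
    (forall i, (i < a)%N -> u`_i = 0) -> (forall i, (b < i)%N -> v`_i = 0) ->
  (b < a + j)%N -> corr n j v u = 0.
Proof.
move=> u_low v_high baj; rewrite /corr big_nat big1 // => i /andP[ji _].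
have [/v_high -> | ib] := ltnP b i; first by rewrite mul0r.
by rewrite u_low ?mulr0 //; lia.
Qed.

Lemma polar_form_low_high n b (u v : {poly F}) :
    (forall i, (i < b + m)%N -> u`_i = 0) -> (forall i, (b < i)%N -> v`_i = 0) ->
  (b + m <= n)%N -> polar_form n u v = c m * (u`_(b + m) * v`_b) *+ (1 + (m == 0))%N.
Proof.
move=> u_low v_high bmn.
have corr_uv j : (j <= m)%N -> corr n j u v = (j == m)%:R * (u`_(b + m) * v`_b).
  by move=> jm; rewrite (corr_low_high u_low v_high) ?eqn_add2l //; lia.
have corr_vu j : (0 < m + j)%N -> corr n j v u = 0.
  by move=> mj; rewrite (corr_high_low _ u_low v_high) //; lia.
rewrite /polar_form (bigD1 ord_max) //= big1 => [|j /eqP/val_eqP/= jm]; last first.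
  by rewrite corr_uv ?corr_vu ?(negPf jm) ?mul0r ?addr0 ?mulr0 //; move: (ltn_ord j); lia.
rewrite corr_uv // eqxx mul1r addr0.
have [m0 | m_gt0] := posnP m; last by rewrite corr_vu ?addr0 ?mulr1n //; lia.
have corr0C : corr n m v u = corr n m u v.
  by rewrite m0; apply: eq_bigr => i _; rewrite subn0 mulrC.
by rewrite corr0C corr_uv // m0 eqxx mul1r mulr2n mulrDr.
Qed.

Lemma polar_form_mulXn_neq0 n N k (g p : {poly F}) :
    c m != 0 -> 2%:R != 0 :> F -> size g = k.+1 -> p != 0 ->
    (size p + k + m <= N)%N -> (k + N <= n)%N ->
  exists2 s, (s < N)%N & polar_form n (g * p) (g * 'X^s) != 0.
Proof.
move=> cm0 two0 sg p0 spN kNn.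
have g0 : g != 0 by rewrite -size_poly_gt0 sg.
have [o go g_low] := poly_lowest_coef g0.
have ok : (o <= k)%N.
  by rewrite -ltnS -sg ltnNge; apply: contra go => /leq_sizeP/(_ o (leqnn o))->.
have [d sp] : {d | size p = d.+1} by exists (size p).-1; rewrite prednK ?size_poly_gt0.
have sgp : size (g * p) = (k + d).+1 by rewrite size_mul // sg sp addnS.
(* The lowest coefficient of [g * 'X^s] lies exactly [m] places above the
   top coefficient of [g * p], so a single product survives in the polar form. *)
set s := (d + (k - o) + m)%N.
exists s; first by rewrite /s; lia.
have u_low i : (i < k + d + m)%N -> (g * 'X^s)`_i = 0.
  by move=> i_lt; rewrite coefMXn; case: ltnP => // si; rewrite g_low //; lia.
have v_high i : (k + d < i)%N -> (g * p)`_i = 0.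
  by move=> kdi; rewrite nth_default // sgp.
rewrite polar_formC (polar_form_low_high u_low v_high); last lia.
have -> : (g * 'X^s)`_(k + d + m) = g`_o.
  by rewrite (_ : k + d + m = o + s)%N ?coefMXn ?ltnNge ?leq_addl ?addnK //; lia.
have : lead_coef (g * p) != 0 by rewrite lead_coef_eq0 mulf_neq0.
rewrite lead_coefE sgp /= => gp_top.
by rewrite -mulr_natr !mulf_neq0 //; case: (m == 0)%N; rewrite ?oner_neq0.
Qed.

End PolarForm.

Lemma QA_polar (F : finFieldType) m (c a : nat -> F) n (u v : {poly F}) :
  QA m c a n (u + v) = QA m c a n u + QA m c a n v + polar_form m c n u v.
Proof.
rewrite /QA /polar_form /corr addrACA -!big_split /= addrAC -big_split /=.
congr (_ + _); last by apply: eq_bigr => i _; rewrite coefD mulrDr.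
apply: eq_bigr => j _; rewrite -!mulrDr; congr (_ * _).
by rewrite -!big_split /=; apply: eq_bigr => i _; rewrite !coefD; ring.
Qed.

Lemma odd_card_two_neq0 (F : finFieldType) : odd #|F| -> 2%:R != 0 :> F.
Proof.
move=> oddF; apply: contraTneq oddF => two0.
have pchar2 : (2 \in [pchar F])%N by rewrite inE /= two0 eqxx.
have := finNzRing_gt1 F; rewrite [#|F|](card_pprimeChar pchar2).
by case: logn => // e _; rewrite expnS oddM.
Qed.

Section AdditiveCharacter.
Variables (F : finFieldType) (R : realType) (psi : F -> R[i]).
Hypothesis psi_char : add_char psi.

Lemma add_char0 : psi 0 = 1. Proof. by case: psi_char. Qed.
Lemma add_charD x y : psi (x + y) = psi x * psi y. Proof. by case: psi_char. Qed.

Lemma add_charMn x n : psi (x *+ n) = psi x ^+ n.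
Proof.
by elim: n => [|n IHn]; rewrite ?mulr0n ?expr0 ?add_char0 // mulrS add_charD IHn exprS.
Qed.

Lemma norm_add_char x : `|psi x| = 1.
Proof.
have [p p_prime /mulrn_pchar p0] := finPcharP F.
have : `|psi x| ^+ p = 1 by rewrite -normrX -add_charMn p0 add_char0 normr1.
by move/eqP; rewrite pexpr_eq1 ?normr_ge0 ?prime_gt0 // => /eqP.
Qed.

Lemma conj_add_char x : (psi x)^*%C = psi (- x).
Proof.
have psi_x0 : psi x != 0 by rewrite -normr_eq0 norm_add_char oner_neq0.
apply: (mulfI psi_x0); rewrite -sqr_normc norm_add_char expr1n.
by rewrite -add_charD subrr add_char0.
Qed.

Hypothesis psi_nontriv : nontrivial_char psi.

Lemma sum_add_char_scalar (V : finLmodType F) (phi : V -> F) :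
  scalar phi -> (exists v, phi v != 0) -> \sum_v psi (phi v) = 0.
Proof.
move=> phi_lin [v0 phi_v0]; have [x psi_x] := psi_nontriv.
have phiD u v : phi (u + v) = phi u + phi v.
  by have := phi_lin 1 u v; rewrite scale1r mul1r.
set w := (x / phi v0) *: v0.
have phi_w : phi w = x by rewrite /w (scalable_linear phi_lin) /= divfK.
have S_shift : \sum_v psi (phi v) = psi x * \sum_v psi (phi v).
  rewrite {1}(reindex_inj (addIr w)) mulr_sumr /=.
  by apply: eq_bigr => v _; rewrite phiD phi_w add_charD mulrC.
have : (1 - psi x) * \sum_v psi (phi v) = 0 by rewrite mulrBl mul1r -S_shift subrr.
by move/eqP; rewrite mulf_eq0 subr_eq0 eq_sym (negPf psi_x) => /eqP.
Qed.

Lemma weyl_differencing (V : finLmodType F) (Q D : V -> F) (L : V -> V -> F) :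
    (forall x y, Q (x + y) = Q x + D y + L y x) -> (forall y, scalar (L y)) ->
  `|\sum_x psi (Q x)| ^+ 2 <= (#|V| * #|[set y | [forall x, L y x == 0]]|)%:R.
Proof.
move=> QD L_lin; set rad := [set y | _].
have expand : `|\sum_x psi (Q x)| ^+ 2 = \sum_y psi (D y) * \sum_x psi (L y x).
  rewrite sqr_normc rmorph_sum mulr_sumr.
  under eq_bigr => x _ do rewrite mulr_suml (reindex_inj (addrI x)) /=.
  rewrite exchange_big /=; apply: eq_bigr => y _; rewrite mulr_sumr.
  apply: eq_bigr => x _.
  by rewrite conj_add_char -!add_charD QD; congr psi; ring.
have inner y : `|\sum_x psi (L y x)| <= if y \in rad then #|V|%:R else 0.
  case: ifPn => [_ | y_nrad].
    apply: le_trans (ler_norm_sum _ _ _) _.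
    by rewrite (eq_bigr (fun=> 1)) ?sumr_const // => x _; rewrite norm_add_char.
  rewrite sum_add_char_scalar ?normr0 //.
  by move: y_nrad; rewrite inE negb_forall => /existsP.
rewrite -[leLHS]ger0_norm ?exprn_ge0 // expand.
apply: le_trans (ler_norm_sum _ _ _) _.
apply: le_trans (_ : _ <= \sum_y if y \in rad then #|V|%:R else 0) _.
  by apply: ler_sum => y _; rewrite normrM norm_add_char mul1r inner.
by rewrite -big_mkcond sumr_const natrM mulr_natr.
Qed.

End AdditiveCharacter.

Lemma size_Xn_add_rVpoly (F : fieldType) N (v : 'rV[F]_N) :
  size ('X^N + rVpoly v) = N.+1.
Proof. by rewrite size_addl size_polyXn // ltnS size_poly. Qed.

Lemma Poly_rcons1_tuple (F : fieldType) N (v : 'rV[F]_N) :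
  Poly (rcons [tuple v 0 i | i < N] 1) = 'X^N + rVpoly v.
Proof.
apply/polyP => j; rewrite coef_Poly coefD coefXn nth_rcons size_tuple coef_rVpoly.
case: insubP => [i /= -> <- | /negPf j_ge] /=.
  by rewrite ltn_eqF // add0r (nth_map i) ?size_enum_ord // nth_ord_enum.
by rewrite j_ge addr0; case: eqP.
Qed.

Lemma sum_monic_polys (F : finFieldType) (V : nmodType) N (G : {poly F} -> V) :
  \sum_(h <- monic_polys F N) G h = \sum_(v : 'rV[F]_N) G ('X^N + rVpoly v).
Proof.
rewrite /monic_polys big_map big_enum /=.
rewrite (reindex (fun v : 'rV[F]_N => [tuple v 0 i | i < N])) /=.
  by apply: eq_bigr => v _; rewrite Poly_rcons1_tuple.
exists (fun t : N.-tuple F => \row_i tnth t i) => [v _ | t _].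
  by apply/rowP => i; rewrite mxE tnth_mktuple.
by apply: eq_from_tnth => i; rewrite tnth_mktuple mxE.
Qed.

Section PolarRadical.
Variables (F : finFieldType) (m : nat) (c : nat -> F).
Hypotheses (cm_neq0 : c m != 0) (two_neq0 : 2%:R != 0 :> F).
Variables (n k N : nat) (g : {poly F}).
Hypotheses (size_g : size g = k.+1) (kNn : (k + N <= n)%N).

Definition polar_radical : {set 'rV[F]_N} :=
  [set y | [forall x : 'rV_N, polar_form m c n (g * rVpoly y) (g * rVpoly x) == 0]].

Lemma polar_radicalB : {in polar_radical &, forall y1 y2, y1 - y2 \in polar_radical}.
Proof.
move=> y1 y2 /[!inE] /forallP rad1 /forallP rad2; apply/forallP => x.
by rewrite linearB mulrBr polar_formC linearB /= !(polar_formC _ _ _ (g * rVpoly x))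
  (eqP (rad1 x)) (eqP (rad2 x)) subrr.
Qed.

Lemma polar_radical_small_eq0 y :
  y \in polar_radical -> (size (rVpoly y) <= N - (k + m))%N -> y = 0.
Proof.
move=> /[!inE] /forallP y_rad small; apply: (can_inj rVpolyK); rewrite linear0.
apply/eqP; apply: contraT => p_nz.
have p_size : (size (rVpoly y) + k + m <= N)%N.
  by move: small; rewrite -size_poly_gt0 in p_nz; lia.
have [s s_lt] := polar_form_mulXn_neq0 cm_neq0 two_neq0 size_g p_nz p_size kNn.
by have := y_rad (delta_mx 0 (Ordinal s_lt)); rewrite rVpoly_delta => ->.
Qed.

Lemma card_polar_radical : (#|polar_radical| <= #|F| ^ (k + m))%N.
Proof.
pose top (y : 'rV[F]_N) : 'rV[F]_(k + m) :=
  \row_(j < k + m) (rVpoly y)`_(N - (k + m) + j).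
have top_inj : {in polar_radical &, injective top}.
  move=> y1 y2 rad1 rad2 top12; apply/eqP; rewrite -subr_eq0; apply/eqP.
  apply: polar_radical_small_eq0; first exact: polar_radicalB.
  apply/leq_sizeP => j j_ge; rewrite linearB coefB.
  have [j_lt | j_ge'] := ltnP j N; last first.
    by rewrite !nth_default ?subrr // (leq_trans (size_poly _ _)).
  have j_top : (j - (N - (k + m)) < k + m)%N by lia.
  have := congr1 (fun r : 'rV_(k + m) => r 0 (Ordinal j_top)) top12.
  by rewrite !mxE subnKC // => ->; rewrite subrr.
rewrite -(card_in_imset top_inj); apply: leq_trans (max_card _) _.
by rewrite card_mx mul1n.
Qed.

End PolarRadical.

Lemma powR_half_sqr (R : realType) (x : R) (e : nat) :
  0 <= x -> powR x (e%:R / 2) ^+ 2 = x ^+ e.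
Proof.
move=> x_ge0; rewrite -powR_mulrn ?powR_ge0 // -powRrM divfK ?pnatr_eq0 //.
exact: powR_mulrn.
Qed.

Section MonicQuadraticSum.
Variables (F : finFieldType) (R : realType) (psi : F -> R[i]).
Hypotheses (psi_char : add_char psi) (psi_nontriv : nontrivial_char psi).
Variables (m : nat) (c a : nat -> F).
Hypotheses (cm_neq0 : c m != 0) (two_neq0 : 2%:R != 0 :> F).

Lemma monic_QA_sum_sqr_le n k (g : {poly F}) : size g = k.+1 -> (k <= n)%N ->
  `|\sum_(h <- monic_polys F (n - k)) psi (QA m c a n (g * h))| ^+ 2
    <= (#|F| ^ (n + m))%:R.
Proof.
move=> size_g kn; set N := (n - k)%N.
have kNn : (k + N <= n)%N by rewrite /N; lia.
rewrite sum_monic_polys.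
apply: le_trans (@weyl_differencing _ _ _ psi_char psi_nontriv _
  (fun v => QA m c a n (g * ('X^N + rVpoly v)))
  (fun y => QA m c a n (g * rVpoly y) + polar_form m c n (g * rVpoly y) (g * 'X^N))
  (fun y x => polar_form m c n (g * rVpoly y) (g * rVpoly x)) _ _) _.
- by move=> x y; rewrite linearD addrA mulrDr QA_polar polar_formC mulrDr linearD !addrA.
- by move=> y x u v /=; rewrite linearP mulrDr -scalerAr linearP.
rewrite ler_nat card_mx mul1n.
apply: leq_trans (leq_mul (leqnn _) (card_polar_radical cm_neq0 two_neq0 size_g kNn)) _.
by rewrite -expnD addnA subnK.
Qed.

Local Notation q := (#|F|%:R : R).

Lemma norm_monic_QA_sum_le n k (g : {poly F}) : size g = k.+1 -> (k <= n)%N ->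
  `|\sum_(h <- monic_polys F (n - k)) psi (QA m c a n (g * h))|
    <= (powR q ((n + m)%:R / 2))%:C%C.
Proof.
move=> size_g kn.
rewrite -(ler_pXn2r (_ : 0 < 2)%N) ?nnegrE ?normr_ge0 ?ler0c ?powR_ge0 //.
apply: le_trans (monic_QA_sum_sqr_le size_g kn) _.
by rewrite -rmorphXn /= powR_half_sqr // -natrX rmorph_nat.
Qed.

Lemma Tk_le n k : (k <= n)%N ->
  Tk m c a psi n k <= (q ^+ k * powR q ((n + m)%:R / 2))%:C%C.
Proof.
move=> kn; rewrite /Tk sum_monic_polys.
apply: le_trans (ler_sum _ (fun v _ =>
  norm_monic_QA_sum_le (size_Xn_add_rVpoly v) kn)) _.
by rewrite sumr_const card_mx mul1n -raddfMn /= -[_ *+ _]mulr_natl natrX.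
Qed.

End MonicQuadraticSum.

Unset Implicit Arguments.

Theorem proposition7p2 (R : realType) (F : finFieldType) (hodd : odd #|F|)
    (m : nat) (c : nat -> F) (hcm : c m != 0) (C : R) (hC : 0 <= C) :
  exists (K : R) (eps : nat -> R),
    (forall d : R, 0 < d -> exists N0 : nat, forall n : nat,
        (N0 <= n)%N -> `|eps n| < d) /\
    exists n0 : nat, forall n k : nat, (n0 <= n)%N -> (k <= n)%N ->
      k%:R <= 9 * n%:R / 20 + C ->
      forall (a : nat -> F) (psi : F -> R[i]),
        add_char psi -> nontrivial_char psi ->
        Tk m c a psi n k
          <= (K * powR (#|F|%:R) (19 * n%:R / 20 + eps n * n%:R))%:C%C.
Proof.
have q_ge1 : 1 <= #|F|%:R :> R by rewrite ler1n; apply: ltnW (finNzRing_gt1 F).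
have q_neq0 : #|F|%:R != 0 :> R by rewrite gt_eqF // (lt_le_trans ltr01 q_ge1).
exists (powR #|F|%:R (C + m%:R / 2)), (fun=> 0); split.
  by move=> d d_gt0; exists 0%N => n _; rewrite normr0.
exists 0%N => n k _ kn k_le a psi psi_char psi_nontriv.
apply: le_trans (Tk_le psi_char psi_nontriv a hcm (odd_card_two_neq0 hodd) kn) _.
rewrite lecR mul0r addr0 -powR_mulrn ?(le_trans ler01) // -!powRD ?q_neq0 ?implybT //.
by apply: ler_powR => //; rewrite natrD; lra.
Qed.
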